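(* Let $n$ individuals be connected by a directed graph with in-neighborhoods $\mathcal N_i$ (self-loops allowed), and suppose the potential outcomes are linear: $Y_i(\mathbf z)=c_{i,\emptyset}+\sum_{j\in\mathcal N_i}c_{ij}z_j$. Let $\mathrm{TTE}=\frac1n\sum_i(Y_i(\mathbf 1)-Y_i(\mathbf 0))$. Suppose a staggered rollout Bernoulli design is implemented with $T+1$ distinct treatment probabilities $0\le p_0<p_1<\dots<p_T\le1$ ($u_i\sim U[0,1]$ i.i.d., $z_i^t=\mathbb I(u_i\le p_t)$), and the outcomes $Y_i(\mathbf z^t)$ are observed without noise. Then among estimators of the form $$\widehat{\mathrm{TTE}}=\frac1n\sum_{i=1}^n\sum_{t=0}^T\alpha_tY_i(\mathbf z^t)$$ (with constants $\alpha_t$) that are unbiased for $\mathrm{TTE}$, the one minimizing variance has $\alpha_0=\frac{-1}{p_T-p_0}$, $\alpha_T=\frac1{p_T-p_0}$, and $\alpha_1=\dots=\alpha_{T-1}=0$.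
   Context: Unbiasedness is understood as $\mathbb E[\widehat{\mathrm{TTE}}]=\mathrm{TTE}$ for every choice of the linear model coefficients $c_{i,\emptyset},c_{ij}$. *)

From HB Require Import structures.
From mathcomp Require Import all_boot all_order all_algebra.
From mathcomp Require Import all_classical all_reals all_analysis.
Set Implicit Arguments. Unset Strict Implicit. Unset Printing Implicit Defensive.
Import Order.TTheory GRing.Theory Num.Theory.
Local Open Scope classical_set_scope.
Local Open Scope ring_scope.

Section Defs.
Context {d : measure_display} {Omega : measurableType d} {R : realType}.
Variable (P : probability Omega R).

Definition iid_uniform01 (n : nat) (u : 'I_n -> {RV P >-> R}) : Prop :=
  (forall (J : {set 'I_n}) (B : 'I_n -> set R), (forall i, measurable (B i)) ->
     P (\bigcap_(i in [set i | i \in J]) (u i @^-1` B i)) =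
     (\prod_(i in J) P (u i @^-1` B i))%E) /\
  (forall i (A : set R), measurable A ->
     P (u i @^-1` A) = lebesgue_measure (A `&` `[0, 1]%classic)).

Definition Y (n : nat) (N : 'I_n -> {set 'I_n}) (c0 : 'I_n -> R)
  (c : 'I_n -> 'I_n -> R) (i : 'I_n) (z : 'I_n -> R) : R :=
  c0 i + \sum_(j in N i) c i j * z j.

Definition TTE (n : nat) (N : 'I_n -> {set 'I_n}) (c0 : 'I_n -> R)
  (c : 'I_n -> 'I_n -> R) : R :=
  n%:R^-1 * \sum_(i < n) (Y N c0 c i (fun _ => 1) - Y N c0 c i (fun _ => 0)).

Definition zt (n T : nat) (u : 'I_n -> {RV P >-> R}) (p : 'I_T.+1 -> R)
  (t : 'I_T.+1) (w : Omega) : 'I_n -> R :=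
  fun j => if u j w <= p t then 1 else 0.

Definition est (n T : nat) (u : 'I_n -> {RV P >-> R}) (N : 'I_n -> {set 'I_n})
  (p : 'I_T.+1 -> R) (alpha : 'I_T.+1 -> R) (c0 : 'I_n -> R)
  (c : 'I_n -> 'I_n -> R) (w : Omega) : R :=
  n%:R^-1 * \sum_(i < n) \sum_(t < T.+1) alpha t * Y N c0 c i (zt u p t w).

Definition unbiased (n T : nat) (u : 'I_n -> {RV P >-> R})
  (N : 'I_n -> {set 'I_n}) (p : 'I_T.+1 -> R) (alpha : 'I_T.+1 -> R) : Prop :=
  forall (c0 : 'I_n -> R) (c : 'I_n -> 'I_n -> R),
    ('E_P[est u N p alpha c0 c] = (TTE N c0 c)%:E)%E.

End Defs.

Definition alpha_opt {R : realType} (T : nat) (p : 'I_T.+1 -> R) (t : 'I_T.+1) : R :=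
  if t == ord0 then - (p ord_max - p ord0)^-1
  else if t == ord_max then (p ord_max - p ord0)^-1 else 0.
Arguments iid_uniform01 {d Omega R} P {n} u.
Arguments unbiased {d Omega R} P {n T} u N p alpha.

(* The estimator is linear in the treatment indicators z_j^t = 1(u_j <= p_t), so
   its mean is  mass(a) avg(c_0) + moment(a) TTE  with mass(a) = sum_t a_t and
   moment(a) = sum_t a_t p_t: unbiasedness means mass(a) = 0 and, as soon as the
   graph has an edge, moment(a) = 1.  By independence of the u_j the centred
   estimator is a sum of uncorrelated terms, one per individual j, and its
   variance factorises as (sum_j D_j^2) V(a), where only D depends on the outcome
   coefficients and V(a) = sum_{t,s} a_t a_s (min(p_t, p_s) - p_t p_s).
   Writing p_t = p_0 + sum_{k<t} w_k with w_k = p_{k+1} - p_k > 0 and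
   B_k = sum_{t>k} a_t, the constraints become sum_k w_k B_k = 1 and
   V(a) = sum_k w_k B_k^2 - 1, so by Cauchy-Schwarz V is minimal exactly when every
   B_k equals 1/(p_T - p_0); the weights are recovered from mass(a) and the B_k. *)

From HB Require Import structures.
From mathcomp Require Import all_boot all_order all_algebra.
From mathcomp Require Import all_classical all_reals all_analysis.
From mathcomp Require Import ring.
Import Order.TTheory GRing.Theory Num.Theory.
Local Open Scope classical_set_scope.
Local Open Scope ring_scope.
Set Implicit Arguments. Unset Strict Implicit.

Section Expectation.
Context {d : measure_display} {Omega : measurableType d} {R : realType}.
Variable P : probability Omega R.

Definition has_expectation (f : Omega -> R) (r : R) :=
  f \in Lfun P 1 /\ 'E_P[f]%E = r%:E.

Lemma has_expectation_ext f g r :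
  has_expectation f r -> f =1 g -> has_expectation g r.
Proof. by move=> fr /funext <-. Qed.

Lemma has_expectation_cst c : has_expectation (fun=> c) c.
Proof. by split; [exact: Lfun_cst | exact: expectation_cst]. Qed.

Lemma has_expectation_indic (A : set Omega) r :
  measurable A -> P A = r%:E -> has_expectation \1_A r.
Proof.
move=> mA PA; split; last by rewrite expectation_indic.
by apply/Lfun1_integrable; exact: integrable_indic.
Qed.

Lemma has_expectationD f g a b : has_expectation f a -> has_expectation g b ->
  has_expectation (fun w => f w + g w) (a + b).
Proof.
move=> [f1 fa] [g1 gb]; split; first exact: rpredD.
by rewrite (expectationD f1 g1) fa gb.
Qed.

Lemma has_expectationZ f a k : has_expectation f a ->
  has_expectation (fun w => k * f w) (k * a).
Proof.
move=> [f1 fa]; have -> : (fun w => k * f w) = k \o* f.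
  by apply/funext => w /=; rewrite mulrC.
by split; [exact: Lfun_scale | rewrite expectationZl // fa].
Qed.

Lemma has_expectation_sum (I : eqType) (s : seq I) (Q : pred I)
    (F : I -> Omega -> R) (e : I -> R) :
  (forall i, has_expectation (F i) (e i)) ->
  has_expectation (fun w => \sum_(i <- s | Q i) F i w) (\sum_(i <- s | Q i) e i).
Proof.
move=> Fe; elim: s => [|a s IH].
  rewrite big_nil; apply: has_expectation_ext (has_expectation_cst 0) _ => w.
  by rewrite big_nil.
rewrite big_cons; case: ifP => Qa.
  apply: has_expectation_ext (has_expectationD (Fe a) IH) _ => w.
  by rewrite big_cons Qa.
by apply: has_expectation_ext IH _ => w; rewrite big_cons Qa.
Qed.

End Expectation.

Section UniformDesign.
Context {d : measure_display} {Omega : measurableType d} {R : realType}.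
Variables (P : probability Omega R) (n : nat) (u : 'I_n -> {RV P >-> R}).
Hypothesis u_iid : iid_uniform01 P u.

Definition treated j x w : R := if u j w <= x then 1 else 0.

Lemma preimage_le j x : [set w | u j w <= x] = u j @^-1` `]-oo, x]%classic.
Proof. by apply/seteqP; split => w /=; rewrite in_itv /= ?andbT. Qed.

Lemma measurable_le j x : measurable [set w | u j w <= x].
Proof. by rewrite preimage_le; apply: measurable_funPTI; exact: measurable_itv. Qed.

Lemma treated_indic j x : treated j x = \1_[set w | u j w <= x].
Proof.
apply/funext => w; rewrite indicE /treated.
by case: ifP => h; [rewrite mem_set | rewrite memNset //= h].
Qed.

Lemma prob_le j x : 0 <= x <= 1 -> P [set w | u j w <= x] = x%:E.
Proof.
move=> /andP[x_ge0 x_le1]; rewrite preimage_le (u_iid.2 j _ (measurable_itv _)).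
have -> : `]-oo, x]%classic `&` `[0, 1]%classic = `[0, x]%classic :> set R.
  apply/seteqP; split => r /=; rewrite !in_itv /=.
    by move=> [rx /andP[r_ge0 _]]; rewrite r_ge0 rx.
  by move=> /andP[r_ge0 rx]; rewrite rx r_ge0 (le_trans rx x_le1).
rewrite lebesgue_measure_itv /= lte_fin.
have [x_gt0|] := ltP 0 x; first by rewrite sube0.
by move=> x_le0; have -> : x = 0 by apply/eqP; rewrite eq_le x_le0 x_ge0.
Qed.

Lemma prob_leI j k x y : j != k -> 0 <= x <= 1 -> 0 <= y <= 1 ->
  P ([set w | u j w <= x] `&` [set w | u k w <= y]) = (x * y)%:E.
Proof.
move=> jk x01 y01.
pose B i : set R := if i == j then `]-oo, x]%classic else `]-oo, y]%classic.
have mB i : measurable (B i) by rewrite /B; case: ifP => _; exact: measurable_itv.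
have Bj : B j = `]-oo, x]%classic by rewrite /B eqxx.
have Bk : B k = `]-oo, y]%classic by rewrite /B eq_sym (negbTE jk).
have := u_iid.1 [set j; k]%SET B mB.
rewrite big_setU1 ?big_set1 ?inE //= Bj Bk -!preimage_le !prob_le // EFinM => <-.
congr (P _); apply/seteqP; split => w /=.
  move=> [uj uk] i /=; rewrite !inE => /orP[] /eqP ->.
    by rewrite Bj /= in_itv.
  by rewrite Bk /= in_itv.
move=> h; split.
  by have := h j (set21 j k); rewrite Bj /= in_itv /= ?andbT.
by have := h k (set22 j k); rewrite Bk /= in_itv /= ?andbT.
Qed.

Lemma has_expectation_treated j x :
  0 <= x <= 1 -> has_expectation P (treated j x) x.
Proof.
move=> x01; rewrite treated_indic.
exact: has_expectation_indic (measurable_le j x) (prob_le j x01).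
Qed.

Lemma has_expectation_treatedM j k x y : 0 <= x <= 1 -> 0 <= y <= 1 ->
  has_expectation P (fun w => treated j x w * treated k y w)
    (if j == k then Num.min x y else x * y).
Proof.
move=> x01 y01; case: eqP => [<-|/eqP jk].
  have min01 : 0 <= Num.min x y <= 1.
    case/andP: x01 => x_ge0 x_le1; case/andP: y01 => y_ge0 _.
    by rewrite le_min x_ge0 y_ge0 ge_min x_le1.
  apply: has_expectation_ext (has_expectation_treated j min01) _ => w.
  by rewrite /treated le_min; do 2 case: (_ <= _); rewrite ?mulr1 ?mulr0.
have mI := measurableI _ _ (measurable_le j x) (measurable_le k y).
apply: has_expectation_ext (has_expectation_indic mI (prob_leI jk x01 y01)) _ => w.
by rewrite indicI !treated_indic.
Qed.

End UniformDesign.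

Section Weights.
Variables (R : realDomainType) (T : nat) (p : 'I_T.+1 -> R).
Implicit Types b : 'I_T.+1 -> R.

Definition mass b := \sum_(t < T.+1) b t.
Definition moment b := \sum_(t < T.+1) b t * p t.
Definition second_moment b :=
  \sum_(t < T.+1) \sum_(s < T.+1) b t * b s * Num.min (p t) (p s).
(* Cov(1(u <= p_t), 1(u <= p_s)) = min(p_t, p_s) - p_t p_s for u uniform on [0, 1]. *)
Definition design_var b :=
  \sum_(t < T.+1) \sum_(s < T.+1) b t * b s * (Num.min (p t) (p s) - p t * p s).
Definition incr (k : 'I_T) := p (lift ord0 k) - p (widen_ord (leqnSn T) k).
(* [tail b k.+1] is the B_k of the proof idea, and [tail b 0] is the mass. *)
Definition tail b m := \sum_(t < T.+1) (m <= t)%:R * b t.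

Lemma design_varE b : design_var b = second_moment b - moment b ^+ 2.
Proof.
rewrite /design_var /second_moment /moment expr2 mulr_suml -sumrB.
apply: eq_bigr => t _; rewrite mulr_sumr -sumrB.
by apply: eq_bigr => s _; ring.
Qed.

Lemma p_telescope (t : 'I_T.+1) : p t = p ord0 + \sum_(k < T) (k < t)%:R * incr k.
Proof.
pose q m := p (inord m).
have incrE (k : 'I_T) : incr k = q k.+1 - q k.
  rewrite /incr /q; congr (p _ - p _); apply: val_inj; rewrite /= inordK //.
  - exact: ltn_ord.
  - exact: leqW.
under eq_bigr do rewrite incrE.
rewrite -(big_mkord xpredT (fun k => (k < t)%:R * (q k.+1 - q k))).
rewrite (big_cat_nat (leq0n t) (leq_ord t)) /= [X in _ + (_ + X)]big1_seq; last first.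
  by move=> k /andP[_]; rewrite mem_index_iota => /andP[tk _]; rewrite ltnNge tk mul0r.
rewrite addr0 big_nat_cond (eq_bigr (fun k => q k.+1 - q k)); last first.
  by move=> k /andP[/andP[_ ->] _]; rewrite mul1r.
rewrite -big_nat_cond telescope_sumr // /q inord_val.
have -> : inord 0 = ord0 :> 'I_T.+1 by apply: val_inj; rewrite /= inordK.
by rewrite addrC subrK.
Qed.

Lemma sum_incr : \sum_(k < T) incr k = p ord_max - p ord0.
Proof.
rewrite (p_telescope ord_max) addrC addKr.
by apply: eq_bigr => k _; rewrite /= ltn_ord mul1r.
Qed.

Lemma tail0 b : tail b 0 = mass b.
Proof. by apply: eq_bigr => t _; rewrite mul1r. Qed.

Lemma tail_overflow b : tail b T.+1 = 0.
Proof. by rewrite /tail big1 // => t _; rewrite leqNgt ltn_ord mul0r. Qed.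

Lemma tailB b (t : 'I_T.+1) : tail b t - tail b t.+1 = b t.
Proof.
rewrite -sumrB (bigD1 t) //= leqnn ltnn mul1r mul0r subr0 big1 ?addr0 // => s st.
rewrite -mulrBl.
suff -> : (t <= s)%N = (t < s)%N by rewrite subrr mul0r.
by rewrite ltn_neqAle eq_sym -[(s : nat) == t]/(s == t) st.
Qed.

Lemma eq_weights_tail b b' :
  (forall m, (m <= T)%N -> tail b m = tail b' m) -> b =1 b'.
Proof.
move=> eq_tail t; rewrite -tailB -[RHS]tailB eq_tail ?leq_ord //.
have [tT|Tt] := ltnP t T; first by rewrite eq_tail.
have -> : t.+1 = T.+1 by apply/eqP; rewrite eqSS eqn_leq leq_ord.
by rewrite !tail_overflow.
Qed.

Lemma moment_tail b : moment b = p ord0 * mass b + \sum_(k < T) incr k * tail b k.+1.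
Proof.
rewrite /moment /mass mulr_sumr.
under eq_bigr => t _ do rewrite p_telescope mulrDr mulr_sumr.
rewrite big_split /=; congr (_ + _); first by apply: eq_bigr => t _; rewrite mulrC.
rewrite exchange_big /=; apply: eq_bigr => k _; rewrite mulr_sumr.
by apply: eq_bigr => t _; ring.
Qed.

Hypothesis p_homo : forall s t : 'I_T.+1, (s <= t)%N -> p s <= p t.

Lemma min_telescope (t s : 'I_T.+1) :
  Num.min (p t) (p s) = p ord0 + \sum_(k < T) ((k < t)%:R * (k < s)%:R) * incr k.
Proof.
wlog ts : t s / (t <= s)%N.
  move=> min_le; have [|st] := leqP t s; first exact: min_le.
  rewrite minC min_le ?(ltnW st) //; congr (_ + _).
  by apply: eq_bigr => k _; rewrite [_ * (k < s)%:R]mulrC.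
rewrite min_l ?p_homo // p_telescope; congr (_ + _); apply: eq_bigr => k _.
by case: (ltnP k t) => kt; rewrite ?mul0r // (leq_trans kt ts) mulr1.
Qed.

Lemma second_moment_tail b :
  second_moment b = p ord0 * mass b ^+ 2 + \sum_(k < T) incr k * tail b k.+1 ^+ 2.
Proof.
have sqr_sum (F : 'I_T.+1 -> R) :
    (\sum_t F t) ^+ 2 = \sum_(t < T.+1) \sum_(s < T.+1) F t * F s.
  by rewrite expr2 mulr_suml; apply: eq_bigr => t _; rewrite mulr_sumr.
have -> : \sum_(k < T) incr k * tail b k.+1 ^+ 2 = \sum_(t < T.+1) \sum_(s < T.+1)
    \sum_(k < T) incr k * ((k < t)%:R * b t * ((k < s)%:R * b s)).
  under eq_bigr => k _ do rewrite sqr_sum !mulr_sumr.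
  rewrite exchange_big /=; apply: eq_bigr => t _.
  by rewrite exchange_big /=; apply: eq_bigr => s _; rewrite mulr_sumr.
rewrite /second_moment /mass sqr_sum mulr_sumr -big_split /=; apply: eq_bigr => t _.
rewrite mulr_sumr -big_split /=; apply: eq_bigr => s _.
rewrite min_telescope mulrDr mulr_sumr; congr (_ + _); first by ring.
by apply: eq_bigr => k _; ring.
Qed.

End Weights.

Section WeightedSquares.
Variables (R : realFieldType) (I : finType) (w B : I -> R).
Hypothesis w_ge0 : forall i, 0 <= w i.
Hypothesis wB1 : \sum_i w i * B i = 1.

Let W := \sum_i w i.

Lemma weighted_sqr_center :
  \sum_i w i * (B i - W^-1) ^+ 2 = \sum_i w i * B i ^+ 2 - W^-1.
Proof.
have W_neq0 : W != 0.
  apply/eqP => /psumr_eq0P W0; move/eqP: wB1.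
  by rewrite big1 ?(eq_sym 0) ?oner_eq0 // => i _; rewrite W0 ?mul0r.
rewrite (eq_bigr (fun i =>
    w i * B i ^+ 2 - 2 * W^-1 * (w i * B i) + W^-1 ^+ 2 * w i)) => [|i _]; last by ring.
rewrite big_split sumrB /= -!mulr_sumr wB1 -/W.
by field.
Qed.

Lemma weighted_sqr_ge : W^-1 <= \sum_i w i * B i ^+ 2.
Proof.
rewrite -subr_ge0 -weighted_sqr_center.
by apply: sumr_ge0 => i _; rewrite mulr_ge0 ?sqr_ge0.
Qed.

Lemma weighted_sqr_eq : (forall i, 0 < w i) ->
  \sum_i w i * B i ^+ 2 <= W^-1 -> forall i, B i = W^-1.
Proof.
move=> w_gt0 le_sqr i.
have term_ge0 j : 0 <= w j * (B j - W^-1) ^+ 2 by rewrite mulr_ge0 ?sqr_ge0.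
have sum0 : \sum_j w j * (B j - W^-1) ^+ 2 = 0.
  apply/eqP; rewrite eq_le; apply/andP; split; last exact: sumr_ge0.
  by rewrite weighted_sqr_center subr_le0.
have /eqP := psumr_eq0P (fun j _ => term_ge0 j) sum0 (i := i) isT.
by rewrite mulf_eq0 gt_eqF //= sqrf_eq0 subr_eq0 => /eqP.
Qed.

End WeightedSquares.

Section OptimalWeights.
Variables (R : realType) (T : nat) (p : 'I_T.+1 -> R).
Hypothesis T_gt0 : (0 < T)%N.
Hypothesis p_incr : forall s t : 'I_T.+1, (s < t)%N -> p s < p t.

Let W := p ord_max - p ord0.

Lemma p_nondecr (s t : 'I_T.+1) : (s <= t)%N -> p s <= p t.
Proof.
rewrite leq_eqVlt => /orP[/eqP st|st]; last exact/ltW/p_incr.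
by rewrite (val_inj st).
Qed.

Lemma incr_gt0 k : 0 < incr p k.
Proof. by rewrite subr_gt0 p_incr. Qed.

Lemma spread_neq0 : W != 0.
Proof. by rewrite subr_eq0 gt_eqF // p_incr. Qed.

Lemma sum_alpha_optM (f : 'I_T.+1 -> R) :
  \sum_(t < T.+1) alpha_opt p t * f t = (f ord_max - f ord0) / W.
Proof.
have max_neq0 : ord_max != ord0 :> 'I_T.+1 by rewrite -(inj_eq val_inj) /= -lt0n.
rewrite (bigD1 ord0) //= (bigD1 ord_max) //= big1 ?addr0; last first.
  by move=> t /andP[/negbTE t0 /negbTE tmax]; rewrite /alpha_opt t0 tmax mul0r.
by rewrite /alpha_opt eqxx (negbTE max_neq0) eqxx -/W; ring.
Qed.

Lemma mass_alpha_opt : mass (alpha_opt p) = 0.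
Proof.
rewrite /mass (eq_bigr (fun t => alpha_opt p t * 1)) => [|t _]; last by rewrite mulr1.
by rewrite sum_alpha_optM subrr mul0r.
Qed.

Lemma moment_alpha_opt : moment p (alpha_opt p) = 1.
Proof. by rewrite /moment sum_alpha_optM mulfV // spread_neq0. Qed.

Lemma tail_alpha_opt (k : 'I_T) : tail (alpha_opt p) k.+1 = W^-1.
Proof.
rewrite /tail; under eq_bigr do rewrite mulrC.
by rewrite sum_alpha_optM /= ltn_ord subr0 mul1r.
Qed.

Lemma design_var_alpha_opt : design_var p (alpha_opt p) = W^-1 - 1.
Proof.
rewrite design_varE (second_moment_tail p_nondecr) mass_alpha_opt moment_alpha_opt.
under eq_bigr do rewrite tail_alpha_opt.
rewrite -mulr_suml sum_incr -/W expr0n mulr0 add0r expr1n.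
by congr (_ - 1); field; rewrite spread_neq0.
Qed.

Section Unbiased.
Variable b : 'I_T.+1 -> R.
Hypotheses (mass_b : mass b = 0) (moment_b : moment p b = 1).

Let sum_incr_tail : \sum_(k < T) incr p k * tail b k.+1 = 1.
Proof. by rewrite -moment_b moment_tail mass_b mulr0 add0r. Qed.

Let design_var_tail : design_var p b = \sum_(k < T) incr p k * tail b k.+1 ^+ 2 - 1.
Proof.
rewrite design_varE (second_moment_tail p_nondecr) mass_b moment_b.
by rewrite expr0n mulr0 add0r expr1n.
Qed.

Lemma design_var_alpha_opt_le : design_var p (alpha_opt p) <= design_var p b.
Proof.
rewrite design_var_alpha_opt design_var_tail lerD2r /W -sum_incr.
exact: weighted_sqr_ge (fun k => ltW (incr_gt0 k)) sum_incr_tail.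
Qed.

Lemma design_var_alpha_opt_eq :
  design_var p b <= design_var p (alpha_opt p) -> b =1 alpha_opt p.
Proof.
rewrite design_var_alpha_opt design_var_tail lerD2r /W -sum_incr => le_sqr.
have tail_b := weighted_sqr_eq (fun k => ltW (incr_gt0 k)) sum_incr_tail incr_gt0 le_sqr.
apply: eq_weights_tail => -[_|k kT]; first by rewrite !tail0 mass_b mass_alpha_opt.
by rewrite (tail_b (Ordinal kT)) (tail_alpha_opt (Ordinal kT)) sum_incr.
Qed.

End Unbiased.
End OptimalWeights.

Lemma psumr_gt0 (R : numDomainType) (I : finType) (F : I -> R) (i0 : I) :
  (forall i, 0 <= F i) -> 0 < F i0 -> 0 < \sum_i F i.
Proof. by move=> F_ge0 Fi0; rewrite (bigD1 i0) //= ltr_wpDr // sumr_ge0. Qed.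

Lemma TTE_E (R : realType) n (N : 'I_n -> {set 'I_n}) c0 c :
  TTE N c0 c = n%:R^-1 * \sum_(i < n) \sum_(j in N i) c i j :> R.
Proof.
congr (_ * _); apply: eq_bigr => i _.
rewrite /Y opprD addrACA subrr add0r -sumrB.
by apply: eq_bigr => j _; rewrite mulr1 mulr0 subr0.
Qed.

Lemma TTE_ones_gt0 (R : realType) n (N : 'I_n -> {set 'I_n}) (c0 : 'I_n -> R) :
  (exists i j, j \in N i) -> 0 < TTE N c0 (fun _ _ => 1).
Proof.
move=> [i0 [j0 j0i0]]; rewrite TTE_E mulr_gt0 ?invr_gt0 ?ltr0n //.
  by apply: leq_ltn_trans (ltn_ord i0).
apply: (psumr_gt0 (i0 := i0)) => [i|]; first exact: sumr_ge0.
by rewrite sumr_const ltr0n card_gt0; apply/set0Pn; exists j0.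
Qed.

Section Estimator.
Context {d : measure_display} {Omega : measurableType d} {R : realType}.
Variables (P : probability Omega R) (n : nat) (u : 'I_n -> {RV P >-> R}).
Hypothesis u_iid : iid_uniform01 P u.
Variables (T : nat) (N : 'I_n -> {set 'I_n}) (p : 'I_T.+1 -> R).
Hypothesis p01 : forall t, 0 <= p t <= 1.
Implicit Types beta : 'I_T.+1 -> R.

Definition est_mean beta (c0 : 'I_n -> R) (c : 'I_n -> 'I_n -> R) :=
  mass beta * (n%:R^-1 * \sum_(i < n) c0 i) + moment p beta * TTE N c0 c.

Lemma est_meanE beta (c0 : 'I_n -> R) (c : 'I_n -> 'I_n -> R) :
  est_mean beta c0 c = n%:R^-1 *
    \sum_(i < n) \sum_(t < T.+1) beta t * (c0 i + \sum_(j in N i) c i j * p t).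
Proof.
rewrite /est_mean TTE_E mulrCA [moment _ _ * _]mulrCA -mulrDr.
rewrite mulr_sumr mulr_sumr -big_split.
congr (_ * _); apply: eq_bigr => i _ /=.
under [RHS]eq_bigr do rewrite mulrDr.
rewrite [RHS]big_split /= -mulr_suml; congr (_ + _).
rewrite /moment mulr_suml; apply: eq_bigr => t _; rewrite !mulr_sumr.
by apply: eq_bigr => j _; ring.
Qed.

Lemma has_expectation_est beta (c0 : 'I_n -> R) (c : 'I_n -> 'I_n -> R) :
  has_expectation P (est u N p beta c0 c) (est_mean beta c0 c).
Proof.
rewrite est_meanE /est; apply: has_expectationZ.
apply: has_expectation_sum => i; apply: has_expectation_sum => t.
apply: has_expectationZ; apply: has_expectationD; first exact: has_expectation_cst.
apply: has_expectation_sum => j; apply: has_expectationZ.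
exact: has_expectation_treated.
Qed.

Lemma unbiasedP beta :
  unbiased P u N p beta <-> forall c0 c, est_mean beta c0 c = TTE N c0 c.
Proof.
split=> unb c0 c; have [_ Eest] := has_expectation_est beta c0 c.
  by move: (unb c0 c); rewrite Eest => -[].
by rewrite Eest unb.
Qed.

Lemma unbiased_mass beta : (0 < n)%N -> unbiased P u N p beta -> mass beta = 0.
Proof.
move=> n_gt0 /unbiasedP /(_ (fun=> 1) (fun _ _ => 0)).
have n_neq0 : n%:R != 0 :> R by rewrite pnatr_eq0 -lt0n.
rewrite /est_mean TTE_E sumr_const card_ord mulVf // mulr1.
by rewrite big1 ?mulr0 ?addr0 // => i _; rewrite big1.
Qed.

Lemma unbiased_moment beta : unbiased P u N p beta ->
  (exists i j, j \in N i) -> moment p beta = 1.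
Proof.
move=> /unbiasedP /(_ (fun=> 0) (fun _ _ => 1)) + edge.
rewrite /est_mean big1 ?mulr0 ?add0r // -[X in _ = X]mul1r.
by move/mulIf; apply; rewrite gt_eqF // TTE_ones_gt0.
Qed.

Lemma unbiased_mass_moment beta :
  mass beta = 0 -> moment p beta = 1 -> unbiased P u N p beta.
Proof.
move=> mass0 moment1; apply/unbiasedP => c0 c.
by rewrite /est_mean mass0 moment1 mul0r add0r mul1r.
Qed.

Definition out_effect (c : 'I_n -> 'I_n -> R) j :=
  n%:R^-1 * \sum_(i < n) (if j \in N i then c i j else 0).

Definition exposure beta j w := \sum_(t < T.+1) beta t * (treated u j (p t) w - p t).

Lemma est_centered beta (c0 : 'I_n -> R) (c : 'I_n -> 'I_n -> R) w :
  est u N p beta c0 c w - est_mean beta c0 c =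
  \sum_(j < n) out_effect c j * exposure beta j w.
Proof.
rewrite /est est_meanE -mulrBr -sumrB.
have -> : \sum_(j < n) out_effect c j * exposure beta j w = n%:R^-1 *
    \sum_(j < n) \sum_(i < n) (if j \in N i then c i j else 0) * exposure beta j w.
  by rewrite mulr_sumr; apply: eq_bigr => j _; rewrite /out_effect -mulrA mulr_suml.
congr (_ * _); rewrite exchange_big /=; apply: eq_bigr => i _.
transitivity (\sum_(t < T.+1) \sum_(j in N i)
    beta t * (c i j * (treated u j (p t) w - p t))).
  rewrite -sumrB; apply: eq_bigr => t _.
  rewrite -mulrBr /Y opprD addrACA subrr add0r -sumrB mulr_sumr.
  by apply: eq_bigr => j _; rewrite /treated /zt; ring.
rewrite exchange_big /= big_mkcond /=; apply: eq_bigr => j _.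
case: ifP => _; last by rewrite mul0r.
by rewrite /exposure mulr_sumr; apply: eq_bigr => t _; ring.
Qed.

Lemma has_expectation_exposureM beta j k :
  has_expectation P (fun w => exposure beta j w * exposure beta k w)
    (if j == k then design_var p beta else 0).
Proof.
pose q t s := if j == k then Num.min (p t) (p s) else p t * p s.
have term t s : has_expectation P
    (fun w => beta t * beta s * (treated u j (p t) w * treated u k (p s) w
       + (- p s * treated u j (p t) w + (- p t * treated u k (p s) w + p t * p s))))
    (beta t * beta s * (q t s + (- p s * p t + (- p t * p s + p t * p s)))).
  apply: has_expectationZ.
  apply: has_expectationD; first exact: has_expectation_treatedM.
  apply: has_expectationD.
    by apply: has_expectationZ; exact: has_expectation_treated.
  apply: has_expectationD.
    by apply: has_expectationZ; exact: has_expectation_treated.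
  exact: has_expectation_cst.
have := has_expectation_sum (index_enum _) xpredT
  (fun t => has_expectation_sum (index_enum _) xpredT (term t)).
have -> : \sum_(t < T.+1) \sum_(s < T.+1)
    beta t * beta s * (q t s + (- p s * p t + (- p t * p s + p t * p s))) =
    (if j == k then design_var p beta else 0).
  rewrite /q /design_var; case: eqP => _.
    by apply: eq_bigr => t _; apply: eq_bigr => s _; ring.
  by rewrite big1 // => t _; rewrite big1 // => s _; ring.
move/has_expectation_ext; apply => w.
rewrite /exposure mulr_suml; apply: eq_bigr => t _; rewrite mulr_sumr.
by apply: eq_bigr => s _; ring.
Qed.

Lemma variance_est beta (c0 : 'I_n -> R) (c : 'I_n -> 'I_n -> R) :
  'V_P[est u N p beta c0 c]%E =
  ((\sum_(j < n) out_effect c j ^+ 2) * design_var p beta)%:E.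
Proof.
have [_ Eest] := has_expectation_est beta c0 c.
rewrite /variance unlock Eest /=.
suff : has_expectation P
    (fun w => (est u N p beta c0 c w - est_mean beta c0 c) *
              (est u N p beta c0 c w - est_mean beta c0 c))
    ((\sum_(j < n) out_effect c j ^+ 2) * design_var p beta) by case.
have := has_expectation_sum (index_enum _) xpredT (fun j =>
  has_expectation_sum (index_enum _) xpredT (fun k =>
    has_expectationZ (out_effect c j * out_effect c k)
      (has_expectation_exposureM beta j k))).
have -> : \sum_(j < n) \sum_(k < n) out_effect c j * out_effect c k *
    (if j == k then design_var p beta else 0) =
    (\sum_(j < n) out_effect c j ^+ 2) * design_var p beta.
  rewrite mulr_suml; apply: eq_bigr => j _.
  rewrite (bigD1 j) //= eqxx big1 ?addr0 ?expr2 // => k.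
  by rewrite eq_sym => /negbTE ->; rewrite mulr0.
move/has_expectation_ext; apply => w.
rewrite est_centered mulr_suml; apply: eq_bigr => j _; rewrite mulr_sumr.
by apply: eq_bigr => k _; ring.
Qed.

Lemma out_effect_noedge (c : 'I_n -> 'I_n -> R) j :
  ~ (exists i j, j \in N i) -> out_effect c j = 0.
Proof.
move=> noedge; rewrite /out_effect big1 ?mulr0 // => i _.
by case: ifP => // ji; case: noedge; exists i, j.
Qed.

Lemma sum_out_effect_ones_sqr_gt0 : (exists i j, j \in N i) ->
  0 < \sum_(j < n) out_effect (fun _ _ => 1) j ^+ 2.
Proof.
move=> [i0 [j0 j0i0]]; apply: (psumr_gt0 (i0 := j0)) => [j|]; first exact: sqr_ge0.
rewrite exprn_gt0 // mulr_gt0 ?invr_gt0 ?ltr0n //.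
  exact: leq_ltn_trans (ltn_ord i0).
by apply: (psumr_gt0 (i0 := i0)) => [i|]; [case: ifP | rewrite j0i0].
Qed.

End Estimator.

Theorem theorem4 (n T : nat) (N : 'I_n -> {set 'I_n})
  (d : measure_display) (Omega : measurableType d) (R : realType)
  (P : probability Omega R) (u : 'I_n -> {RV P >-> R}) (p : 'I_T.+1 -> R) :
  (0 < n)%N -> (0 < T)%N ->
  0 <= p ord0 -> (forall s t : 'I_T.+1, (s < t)%N -> p s < p t) -> p ord_max <= 1 ->
  iid_uniform01 P u ->
  unbiased P u N p (alpha_opt p) /\
  (forall (beta : 'I_T.+1 -> R) (c0 : 'I_n -> R) (c : 'I_n -> 'I_n -> R),
     unbiased P u N p beta ->
     ('V_P[est u N p (alpha_opt p) c0 c] <= 'V_P[est u N p beta c0 c])%E) /\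
  (forall beta : 'I_T.+1 -> R,
     unbiased P u N p beta ->
     (exists i j, j \in N i) ->
     (forall (c0 : 'I_n -> R) (c : 'I_n -> 'I_n -> R),
        ('V_P[est u N p beta c0 c] <= 'V_P[est u N p (alpha_opt p) c0 c])%E) ->
     forall t, beta t = alpha_opt p t).
Proof.
move=> n_gt0 T_gt0 p0_ge0 p_incr pT_le1 u_iid.
have p01 t : 0 <= p t <= 1.
  rewrite (le_trans p0_ge0 (p_nondecr p_incr (s := ord0) (leq0n t))).
  exact: le_trans (p_nondecr p_incr (t := ord_max) (leq_ord t)) pT_le1.
have constraints beta : unbiased P u N p beta -> (exists i j, j \in N i) ->
    mass beta = 0 /\ moment p beta = 1.
  move=> unb edge; split; first exact: (unbiased_mass u_iid p01 n_gt0 unb).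
  exact: (unbiased_moment u_iid p01 unb edge).
split.
  exact: (unbiased_mass_moment u_iid N p01
            (mass_alpha_opt p T_gt0) (moment_alpha_opt T_gt0 p_incr)).
split=> [beta c0 c unb | beta unb edge var_le].
  rewrite !(variance_est u_iid N p01) lee_fin.
  have [edge|noedge] := pselect (exists i j, j \in N i).
    apply: ler_wpM2l; first by apply: sumr_ge0 => j _; exact: sqr_ge0.
    have [mass0 moment1] := constraints beta unb edge.
    exact: (design_var_alpha_opt_le T_gt0 p_incr mass0 moment1).
  by rewrite big1 ?mul0r // => j _; rewrite out_effect_noedge ?expr0n.
have := var_le (fun=> 0) (fun _ _ => 1).
rewrite !(variance_est u_iid N p01) lee_fin ler_pM2l ?sum_out_effect_ones_sqr_gt0 //.
have [mass0 moment1] := constraints beta unb edge.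
exact: (design_var_alpha_opt_eq T_gt0 p_incr mass0 moment1).
Qed.
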